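(* Define $p_0=1$, $q_0=2$, and for $k\ge1$, $p_k=2q_{k-1}$ and $q_k=3q_{k-1}-1$. Let $T_k=\{p_k,p_k+1,\ldots,q_k\}$ and $T=\bigcup_{k\ge0}T_k$. For each $k$, let $\tau_k$ be a permutation of $T_k$ containing no 3-term arithmetic progression as a subsequence. Then: (a) the concatenation $\tau_0\tau_1\tau_2\cdots$ contains no 3-term arithmetic progression as a subsequence, so $T$ is 3-free; (b) $\overline{d}(T)=1/2$ and $\underline{d}(T)=1/4$.
   Context: A sequence contains a $k$-term arithmetic progression as a subsequence if there are positions $i_1<\cdots<i_k$ whose entries satisfy $a_{i_{m+1}}-a_{i_m}=d$ for all $m$, for some fixed $d\neq0$ (positive or negative). A set $S$ of positive integers is $n$-free if its elements can be listed in a sequence, each element appearing exactly once, that contains no $n$-term arithmetic progression as a subsequence. For $S\subseteq\mathbb{Z}_{>0}$ with $A(n)=|S\cap[1,n]|$, the upper density is $\overline{d}(S)=\limsup_{n\to\infty}A(n)/n$ and the lower density is $\underline{d}(S)=\liminf_{n\to\infty}A(n)/n$. Every finite set of consecutive integers admits a permutation with no 3-term arithmetic progression as a subsequence. *)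

From Stdlib Require Import Reals Lra Lia ZArith Arith List Permutation.
Import ListNotations.

Fixpoint pq (k : nat) : nat * nat :=
  match k with
  | 0 => (1, 2)
  | S k' => let q := snd (pq k') in (2 * q, 3 * q - 1)
  end.
Definition p (k : nat) : nat := fst (pq k).
Definition q (k : nat) : nat := snd (pq k).

Definition Tk (k : nat) : list nat := seq (p k) (q k - p k + 1).

Definition inT (x : nat) : Prop := exists k, p k <= x <= q k.

Definition has_AP_list (n : nat) (l : list nat) : Prop :=
  exists (idx : nat -> nat) (d : Z), d <> 0%Z /\
    (forall m, m < n -> idx m < length l) /\
    (forall m, S m < n -> idx m < idx (S m)) /\
    (forall m, S m < n ->
       (Z.of_nat (nth (idx (S m)) l 0%nat) - Z.of_nat (nth (idx m) l 0%nat))%Z = d).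

Definition has_AP_fun (n : nat) (a : nat -> nat) : Prop :=
  exists (idx : nat -> nat) (d : Z), d <> 0%Z /\
    (forall m, S m < n -> idx m < idx (S m)) /\
    (forall m, S m < n ->
       (Z.of_nat (a (idx (S m))) - Z.of_nat (a (idx m)))%Z = d).

(* S is n-free: its elements can be listed (finitely or as an infinite
   sequence), each exactly once, with no n-term AP subsequence. *)
Definition n_free (n : nat) (S : nat -> Prop) : Prop :=
  (exists l : list nat, NoDup l /\ (forall x, In x l <-> S x) /\ ~ has_AP_list n l)
  \/
  (exists a : nat -> nat, (forall i j, a i = a j -> i = j) /\
     (forall x, S x <-> exists i, a i = x) /\ ~ has_AP_fun n a).

(* Infinite concatenation tau 0 ++ tau 1 ++ tau 2 ++ ... evaluated at
   position n (valid when every block is nonempty, which gives enough fuel). *)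
Fixpoint cat_aux (tau : nat -> list nat) (k fuel n : nat) : nat :=
  match fuel with
  | 0 => 0
  | S f => if Nat.ltb n (length (tau k)) then nth n (tau k) 0
           else cat_aux tau (S k) f (n - length (tau k))
  end.
Definition concat_seq (tau : nat -> list nat) (n : nat) : nat :=
  cat_aux tau 0 (S n) n.

Definition countA (S : nat -> bool) (n : nat) : nat :=
  length (filter S (seq 1 n)).

Definition ratio (S : nat -> bool) (n : nat) : R := INR (countA S n) / INR n.

Definition is_limsup (u : nat -> R) (l : R) : Prop :=
  (forall eps : R, (eps > 0)%R -> exists N, forall n, (n >= N)%nat -> (u n < l + eps)%R) /\
  (forall eps : R, (eps > 0)%R -> forall N, exists n, (n >= N)%nat /\ (u n > l - eps)%R).
Definition is_liminf (u : nat -> R) (l : R) : Prop :=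
  (forall eps : R, (eps > 0)%R -> exists N, forall n, (n >= N)%nat -> (u n > l - eps)%R) /\
  (forall eps : R, (eps > 0)%R -> forall N, exists n, (n >= N)%nat /\ (u n < l + eps)%R).

(* The value blocks T_k grow geometrically: every element of T_k is at most
   q_k, the next block starts at 2 q_k, and it ends at 3 q_k - 1.  Hence in a
   3-term progression a, b, c (a + c = 2b) read from left to right in the
   concatenation, c cannot lie in a later block than b (it would be at least
   2 q >= 2b), and a cannot lie in an earlier block than b, c (then
   a + c <= q + (3q - 1) < 4q <= 2b); so the progression lies inside one
   tau_k, which has none.
   For the densities, 2 A(q_k) = q_k + k + 2, A is constant on the gap
   (q_k, 2 q_k) and grows with slope 1 on T_(k+1); the ratio A(n)/n thus peaks
   near 1/2 at the q_k and dips to about 1/4 just before the 2 q_k. *)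
From Stdlib Require Import Reals Lra Lia ZArith Arith List Permutation.

Lemma p_succ k : p (S k) = 2 * q k. Proof. reflexivity. Qed.
Lemma q_succ k : q (S k) = 3 * q k - 1. Proof. reflexivity. Qed.

Lemma q_ge2 k : 2 <= q k.
Proof. induction k; [cbn; lia | rewrite q_succ; lia]. Qed.

Lemma p_ge1 k : 1 <= p k.
Proof. destruct k; [cbn; lia | rewrite p_succ; pose proof (q_ge2 k); lia]. Qed.

Lemma p_lt_q k : p k < q k.
Proof. destruct k; [cbn; lia | rewrite p_succ, q_succ; pose proof (q_ge2 k); lia]. Qed.

Lemma q_mono k k' : k <= k' -> q k <= q k'.
Proof. induction 1; [lia | rewrite q_succ; pose proof (q_ge2 m); lia]. Qed.

Lemma p_mono k k' : k <= k' -> p k <= p k'.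
Proof. induction 1; [lia | rewrite p_succ; pose proof (p_lt_q m); lia]. Qed.

Lemma q_sq_bound k : (k + 2) * (k + 2) <= 2 * q k.
Proof.
  induction k as [|k IH]; [cbn; lia|].
  rewrite q_succ. pose proof (q_ge2 k).
  replace ((S k + 2) * (S k + 2)) with ((k + 2) * (k + 2) + 2 * k + 5) by ring.
  assert (2 * k + 4 <= (k + 2) * (k + 2)) by nia. lia.
Qed.

Lemma blocks_separated k k' : k < k' -> 2 * q k <= p k'.
Proof. intros H. rewrite <- p_succ. apply p_mono; lia. Qed.

Lemma block_unique k k' x : p k <= x <= q k -> p k' <= x <= q k' -> k = k'.
Proof.
  intros H H'. destruct (lt_eq_lt_dec k k') as [[lt|eq]|lt]; auto;
    pose proof (blocks_separated _ _ lt); pose proof (q_ge2 k); pose proof (q_ge2 k'); lia.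
Qed.

Lemma q_bracket n : 2 <= n -> exists k, q k <= n < q (S k).
Proof.
  induction n as [|n IH]; intros H; [lia|].
  destruct (Nat.eq_dec n 1) as [->|ne]; [exists 0; cbn; lia|].
  destruct IH as [k Hk]; [lia|].
  destruct (Nat.eq_dec (S n) (q (S k))) as [e|ne'].
  - exists (S k). rewrite (q_succ (S k)). pose proof (q_ge2 (S k)). lia.
  - exists k. lia.
Qed.

Lemma three_AP_in_blocks k0 k1 k2 a b c :
  p k0 <= a <= q k0 -> p k1 <= b <= q k1 -> p k2 <= c <= q k2 ->
  k0 <= k1 <= k2 -> a + c = 2 * b -> k0 = k2.
Proof.
  intros Ha Hb Hc Hk Habc. pose proof (p_ge1 k0).
  destruct (Nat.eq_dec k1 k2) as [<-|ne].
  - destruct (Nat.eq_dec k0 k1) as [|ne']; [assumption|].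
    destruct k1 as [|j]; [lia|].
    pose proof (q_mono k0 j ltac:(lia)).
    rewrite p_succ in Hb. rewrite q_succ in Hc. lia.
  - pose proof (blocks_separated k1 k2 ltac:(lia)). lia.
Qed.

Section Concatenation.

Variable tau : nat -> list nat.
Hypothesis tau_nonempty : forall k, 0 < length (tau k).

Fixpoint block_start (k : nat) : nat :=
  match k with 0 => 0 | S k' => block_start k' + length (tau k') end.

Definition in_block (k n : nat) : Prop := block_start k <= n < block_start (S k).

Lemma block_start_mono k k' : k <= k' -> block_start k <= block_start k'.
Proof. induction 1; cbn; lia. Qed.

Lemma cat_aux_succ k fuel m :
  cat_aux tau k (S fuel) m =
  if m <? length (tau k) then nth m (tau k) 0
  else cat_aux tau (S k) fuel (m - length (tau k)).
Proof. reflexivity. Qed.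

Lemma cat_aux_in_block j k m fuel :
  m < fuel -> in_block (k + j) (block_start k + m) ->
  cat_aux tau k fuel m = nth (block_start k + m - block_start (k + j)) (tau (k + j)) 0.
Proof.
  unfold in_block. revert k m fuel.
  induction j as [|j IH]; intros k m [|fuel] Hfuel Hm; try lia;
    rewrite cat_aux_succ; cbn [block_start] in *.
  - rewrite Nat.add_0_r in *.
    replace (m <? length (tau k)) with true by (symmetry; apply Nat.ltb_lt; lia).
    f_equal; lia.
  - pose proof (block_start_mono (S k) (k + S j) ltac:(lia)). cbn [block_start] in *.
    replace (m <? length (tau k)) with false by (symmetry; apply Nat.ltb_ge; lia).
    replace (k + S j) with (S k + j) in * by lia.
    pose proof (tau_nonempty k).
    rewrite (IH (S k)); cbn [block_start]; [f_equal| |]; lia.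
Qed.

Lemma concat_seq_in_block k n :
  in_block k n -> concat_seq tau n = nth (n - block_start k) (tau k) 0.
Proof. intros H. apply (cat_aux_in_block k 0 n (S n)); [lia | exact H]. Qed.

Lemma concat_seq_block_start k i :
  i < length (tau k) -> concat_seq tau (block_start k + i) = nth i (tau k) 0.
Proof.
  intros H. rewrite (concat_seq_in_block k); [f_equal; lia | unfold in_block; cbn; lia].
Qed.

Lemma in_block_exists n : exists k, in_block k n.
Proof.
  unfold in_block. induction n as [|n [k Hk]].
  - exists 0. cbn. pose proof (tau_nonempty 0). lia.
  - destruct (Nat.eq_dec (S n) (block_start (S k))) as [e|ne].
    + exists (S k). pose proof (tau_nonempty (S k)). cbn in *. lia.
    + exists k. lia.
Qed.

Lemma in_block_mono k k' n n' : in_block k n -> in_block k' n' -> n <= n' -> k <= k'.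
Proof.
  unfold in_block. intros H H' Hn. destruct (le_lt_dec k k') as [|lt]; [assumption|].
  pose proof (block_start_mono (S k') k lt). lia.
Qed.

Lemma has_AP_list_of_block n k idx d :
  d <> 0%Z ->
  (forall m, m < n -> in_block k (idx m)) ->
  (forall m, S m < n -> idx m < idx (S m)) ->
  (forall m, S m < n ->
     (Z.of_nat (concat_seq tau (idx (S m))) - Z.of_nat (concat_seq tau (idx m)))%Z = d) ->
  has_AP_list n (tau k).
Proof.
  intros Hd Hblock Hinc Hdiff. exists (fun m => idx m - block_start k), d.
  split; [exact Hd|]. split; [|split].
  - intros m Hm. specialize (Hblock m Hm). unfold in_block in Hblock. cbn in Hblock. lia.
  - intros m Hm. pose proof (Hblock m ltac:(lia)). pose proof (Hinc m Hm).
    unfold in_block in *. lia.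
  - intros m Hm. rewrite <- (Hdiff m Hm), !(concat_seq_in_block k); auto with arith.
Qed.

End Concatenation.

Section BlockPermutations.

Variable tau : nat -> list nat.
Hypothesis tau_perm : forall k, Permutation (tau k) (Tk k).

Lemma length_tau k : length (tau k) = q k - p k + 1.
Proof. rewrite (Permutation_length (tau_perm k)). apply length_seq. Qed.

Lemma tau_nonempty k : 0 < length (tau k).
Proof. rewrite length_tau. lia. Qed.

Lemma in_tau k x : In x (tau k) <-> p k <= x <= q k.
Proof.
  pose proof (p_lt_q k). unfold Tk in tau_perm. split; intros Hx.
  - apply (Permutation_in _ (tau_perm k)), in_seq in Hx. lia.
  - apply (Permutation_in _ (Permutation_sym (tau_perm k))), in_seq. lia.
Qed.

Lemma NoDup_tau k : NoDup (tau k).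
Proof. apply (Permutation_NoDup (Permutation_sym (tau_perm k))), seq_NoDup. Qed.

Lemma concat_seq_range k n :
  in_block tau k n -> p k <= concat_seq tau n <= q k.
Proof.
  intros H. rewrite (concat_seq_in_block tau tau_nonempty k n H).
  apply in_tau, nth_In. unfold in_block in H. cbn in H. lia.
Qed.

Lemma concat_seq_inj i j : concat_seq tau i = concat_seq tau j -> i = j.
Proof.
  intros E.
  destruct (in_block_exists tau tau_nonempty i) as [k Hi].
  destruct (in_block_exists tau tau_nonempty j) as [k' Hj].
  pose proof (concat_seq_range k i Hi). pose proof (concat_seq_range k' j Hj).
  assert (k' = k) as -> by (apply (block_unique k' k (concat_seq tau j)); lia).
  rewrite !(concat_seq_in_block tau tau_nonempty k) in E by assumption.
  unfold in_block in Hi, Hj. cbn in Hi, Hj.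
  enough (i - block_start tau k = j - block_start tau k) by lia.
  apply (proj1 (NoDup_nth (tau k) 0) (NoDup_tau k)); lia || assumption.
Qed.

Lemma inT_iff_concat_seq x : inT x <-> exists i, concat_seq tau i = x.
Proof.
  split.
  - intros [k Hk]. apply in_tau, (In_nth _ _ 0) in Hk as [i [Hi <-]].
    exists (block_start tau k + i). exact (concat_seq_block_start tau tau_nonempty k i Hi).
  - intros [i <-]. destruct (in_block_exists tau tau_nonempty i) as [k Hk].
    exists k. exact (concat_seq_range k i Hk).
Qed.

Hypothesis tau_AP_free : forall k, ~ has_AP_list 3 (tau k).

Theorem concat_seq_AP_free : ~ has_AP_fun 3 (concat_seq tau).
Proof.
  intros [idx [d [Hd [Hinc Hdiff]]]].
  destruct (in_block_exists tau tau_nonempty (idx 0)) as [k0 H0].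
  destruct (in_block_exists tau tau_nonempty (idx 1)) as [k1 H1].
  destruct (in_block_exists tau tau_nonempty (idx 2)) as [k2 H2].
  pose proof (Hinc 0 ltac:(lia)). pose proof (Hinc 1 ltac:(lia)).
  assert (k0 <= k1 <= k2) by (split; eapply in_block_mono; eauto; lia).
  assert (k0 = k2) as <-.
  { pose proof (Hdiff 0 ltac:(lia)). pose proof (Hdiff 1 ltac:(lia)).
    apply (three_AP_in_blocks k0 k1 k2 (concat_seq tau (idx 0))
             (concat_seq tau (idx 1)) (concat_seq tau (idx 2)));
      try apply concat_seq_range; auto; lia. }
  assert (k1 = k0) as -> by lia.
  apply (tau_AP_free k0), (has_AP_list_of_block tau tau_nonempty 3 k0 idx d); auto.
  intros [|[|[|m]]] Hm; auto; lia.
Qed.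

Theorem inT_3_free : n_free 3 inT.
Proof.
  right. exists (concat_seq tau). split; [exact concat_seq_inj|].
  split; [exact inT_iff_concat_seq | exact concat_seq_AP_free].
Qed.

End BlockPermutations.

Lemma countA_succ (P : nat -> bool) n :
  countA P (S n) = countA P n + (if P (S n) then 1 else 0).
Proof.
  unfold countA. rewrite seq_S, filter_app, length_app. cbn.
  destruct (P (S n)); cbn; lia.
Qed.

Lemma ratio_le (c n a M : nat) : 0 < n -> 0 < a -> 0 < M ->
  a * c * M <= n * M + a * n -> (INR c / INR n <= 1 / INR a + / INR M)%R.
Proof.
  intros Hn Ha HM H. apply le_INR in H. rewrite !plus_INR, !mult_INR in H.
  apply lt_0_INR in Hn, Ha, HM.
  apply (Rmult_le_reg_r (INR n * INR M * INR a)); [apply Rmult_lt_0_compat; nra|].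
  replace (INR c / INR n * (INR n * INR M * INR a))%R with (INR a * INR c * INR M)%R
    by (field; lra).
  replace ((1 / INR a + / INR M) * (INR n * INR M * INR a))%R
    with (INR n * INR M + INR a * INR n)%R by (field; lra).
  exact H.
Qed.

Lemma ratio_ge (c n a : nat) : 0 < n -> 0 < a ->
  n <= a * c -> (1 / INR a <= INR c / INR n)%R.
Proof.
  intros Hn Ha H. apply le_INR in H. rewrite mult_INR in H.
  apply lt_0_INR in Hn, Ha.
  apply (Rmult_le_reg_r (INR n * INR a)); [nra|].
  replace (INR c / INR n * (INR n * INR a))%R with (INR a * INR c)%R by (field; lra).
  replace (1 / INR a * (INR n * INR a))%R with (INR n) by (field; lra).
  exact H.
Qed.

Section Density.

Variable Tb : nat -> bool.
Hypothesis Tb_spec : forall x, Tb x = true <-> inT x.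

Lemma Tb_between k x : q k < x <= q (S k) -> Tb x = (p (S k) <=? x).
Proof.
  intros Hx. destruct (p (S k) <=? x) eqn:E.
  - apply Tb_spec. exists (S k). apply Nat.leb_le in E. lia.
  - apply Nat.leb_gt in E. destruct (Tb x) eqn:T; [exfalso|reflexivity].
    apply Tb_spec in T as [j Hj].
    destruct (le_lt_dec j k) as [le|lt].
    + pose proof (q_mono j k le). lia.
    + pose proof (p_mono (S k) j lt). lia.
Qed.

(* Truncated subtraction makes [n + 1 - p (S k)] vanish on the gap before T_(k+1). *)
Lemma countA_after_q k n :
  q k <= n <= q (S k) -> countA Tb n = countA Tb (q k) + (n + 1 - p (S k)).
Proof.
  intros Hn. replace n with (q k + (n - q k)) by lia.
  assert (Hm : n - q k <= q (S k) - q k) by lia. revert Hm.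
  generalize (n - q k) as m. rewrite p_succ. pose proof (q_ge2 k).
  induction m as [|m IH]; intros Hm; [rewrite Nat.add_0_r; lia|].
  rewrite Nat.add_succ_r, countA_succ, (Tb_between k); [|lia].
  rewrite IH by lia. rewrite p_succ. destruct (Nat.leb_spec (2 * q k) (S (q k + m))); lia.
Qed.

Lemma countA_q k : 2 * countA Tb (q k) = q k + k + 2.
Proof.
  induction k as [|k IH].
  - assert (Tb 1 = true /\ Tb 2 = true) as [T1 T2]
      by (split; apply Tb_spec; exists 0; cbn; lia).
    cbn [q pq snd]. rewrite !countA_succ, T1, T2. reflexivity.
  - pose proof (q_ge2 k). pose proof (p_lt_q (S k)).
    rewrite (countA_after_q k (q (S k))) by (pose proof (q_mono k (S k)); lia).
    rewrite q_succ, p_succ in *. lia.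
Qed.

Lemma countA_upper k n : q k <= n < q (S k) -> 2 * countA Tb n <= n + k + 2.
Proof.
  intros Hn. rewrite (countA_after_q k n) by lia.
  pose proof (countA_q k). rewrite q_succ in Hn. rewrite p_succ. lia.
Qed.

Lemma countA_lower n : 1 <= n -> n <= 4 * countA Tb n.
Proof.
  intros Hn. destruct (Nat.eq_dec n 1) as [->|ne].
  - rewrite countA_succ. replace (Tb 1) with true; [cbn; lia|].
    symmetry. apply Tb_spec. exists 0. cbn. lia.
  - destruct (q_bracket n) as [k Hk]; [lia|].
    rewrite (countA_after_q k n) by lia.
    pose proof (countA_q k). rewrite q_succ in Hk. rewrite p_succ. lia.
Qed.

Theorem upper_density_T : is_limsup (ratio Tb) (1/2)%R.
Proof.
  unfold ratio. split.
  - intros eps Heps. destruct (archimed_cor1 eps Heps) as [M [HM HM0]].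
    exists (2 * M * M + 2). intros n Hn.
    destruct (q_bracket n) as [k Hk]; [lia|].
    pose proof (countA_upper k n Hk). pose proof (q_sq_bound k).
    assert ((k + 2) * M <= n) by (destruct (le_lt_dec (2 * M) (k + 2)); nia).
    pose proof (ratio_le (countA Tb n) n 2 M ltac:(lia) ltac:(lia) HM0 ltac:(nia)).
    replace (INR 2) with 2%R in * by (cbn; lra). lra.
  - intros eps Heps N. exists (q N).
    pose proof (q_sq_bound N). pose proof (countA_q N).
    split; [nia|].
    pose proof (ratio_ge (countA Tb (q N)) (q N) 2 ltac:(lia) ltac:(lia) ltac:(lia)).
    replace (INR 2) with 2%R in * by (cbn; lra). lra.
Qed.

Theorem lower_density_T : is_liminf (ratio Tb) (1/4)%R.
Proof.
  unfold ratio. split.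
  - intros eps Heps. exists 1. intros n Hn.
    pose proof (ratio_ge (countA Tb n) n 4 ltac:(lia) ltac:(lia) (countA_lower n Hn)).
    replace (INR 4) with 4%R in * by (cbn; lra). lra.
  - intros eps Heps N. destruct (archimed_cor1 eps Heps) as [M [HM HM0]].
    set (k := N + 2 * M). exists (2 * q k - 1).
    pose proof (q_sq_bound k). pose proof (countA_q k).
    split; [unfold k in *; nia|].
    rewrite (countA_after_q k) by (rewrite q_succ; lia). rewrite p_succ.
    replace (2 * q k - 1 + 1 - 2 * q k) with 0 by lia. rewrite Nat.add_0_r.
    assert (2 * M <= k) by (unfold k; lia).
    pose proof (ratio_le (countA Tb (q k)) (2 * q k - 1) 4 M ltac:(lia) ltac:(lia) HM0
                  ltac:(nia)).
    replace (INR 4) with 4%R in * by (cbn; lra). lra.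
Qed.

End Density.

Theorem mainTheorem9
  (tau : nat -> list nat)
  (Htau_perm : forall k, Permutation (tau k) (Tk k))
  (Htau_free : forall k, ~ has_AP_list 3 (tau k))
  (Tb : nat -> bool)
  (HTb : forall x, Tb x = true <-> inT x) :
  (~ has_AP_fun 3 (concat_seq tau) /\ n_free 3 inT) /\
  (is_limsup (ratio Tb) (1/2)%R /\ is_liminf (ratio Tb) (1/4)%R).
Proof.
  split; split.
  - exact (concat_seq_AP_free tau Htau_perm Htau_free).
  - exact (inT_3_free tau Htau_perm Htau_free).
  - exact (upper_density_T Tb HTb).
  - exact (lower_density_T Tb HTb).
Qed.
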